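(* Let $\mathcal{Y}$ be sampled from $\operatorname{TBM}(\rho,\mathcal{S},z_1,\dots,z_d)$, fix a mode $k$, let $Y=\mathrm{mat}_k\mathcal{Y}$ and $X=\mathbb{E}Y$. Then $$\min_{i,j\in[n_k]:\,z_k(i)\ne z_k(j)}\|(XX^\top)_{i:}-(XX^\top)_{j:}\|\ \ge\ \frac{\prod_{k'=1}^d\alpha_{k'}}{\sqrt{2\alpha_k}}\,\frac{\delta_k^2}{\sqrt{n_kr_k}}\,n_1\cdots n_d\,\rho^2,$$ where $\delta_k$ is the mode-$k$ cluster separation and $\alpha_{k'}$ the mode-$k'$ cluster balance coefficients.
   Context: Tensor block model: $\operatorname{TBM}(\rho,\mathcal{S},z_1,\dots,z_d)$ with dimensions $n_1,\dots,n_d$ and cluster counts $r_1,\dots,r_d$ is the law of a random tensor $\mathcal{Y}\in\mathbb{Z}^{n_1\times\cdots\times n_d}$ with independent entries and $\mathbb{E}\mathcal{Y}_{i_1\dots i_d}=\rho\,\mathcal{S}_{z_1(i_1)\dots z_d(i_d)}$, where $\rho\ge0$, $\mathcal{S}\in[-1,1]^{r_1\times\cdots\times r_d}$, $z_j\in[r_j]^{n_j}$. Matricization: $\mathrm{mat}_k(\mathcal{A})\in\mathbb{R}^{n_k\times(n_1\cdots n_d/n_k)}$ has rows indexed by $i_k$ and columns by the remaining indices in lexicographic order, with entries $\mathcal{A}_{i_1\dots i_d}$. Mode-$k$ cluster separation: $\delta_k=\min_{l\ne l'}\|(\mathrm{mat}_k\mathcal{S})_{l:}-(\mathrm{mat}_k\mathcal{S})_{l':}\|/\sqrt{r_1\cdots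 r_d/r_k}$. Mode-$j$ cluster balance coefficient: $\alpha_j=\min_{l\in[r_j]}|z_j^{-1}\{l\}|/(n_j/r_j)$. Norms are Euclidean. *)

From HB Require Import structures.
From mathcomp Require Import all_boot all_order all_algebra.
Set Implicit Arguments. Unset Strict Implicit. Unset Printing Implicit Defensive.
Import Order.TTheory GRing.Theory Num.Theory.
Local Open Scope ring_scope.

Definition mindex (d : nat) (n : 'I_d -> nat) := {dffun forall j : 'I_d, 'I_(n j)}.

(* Column indices of the mode-k matricization: multi-indices over the
   remaining modes j <> k. (The column order is irrelevant for the
   row-norm quantities used below.) *)
Definition cindex (d : nat) (n : 'I_d -> nat) (k : 'I_d) :=
  {dffun forall j : {j : 'I_d | j != k}, 'I_(n (val j))}.

Definition merge (d : nat) (n : 'I_d -> nat) (k : 'I_d) (i : 'I_(n k))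
    (c : cindex n k) : mindex n :=
  finfun (fun j : 'I_d =>
    match k =P j return 'I_(n j) with
    | ReflectT e => cast_ord (congr1 n e) i
    | ReflectF ne => c (exist _ j (introN eqP (fun e => ne (esym e))))
    end).

Definition matk (R : Type) (d : nat) (n : 'I_d -> nat) (A : mindex n -> R)
    (k : 'I_d) : 'I_(n k) -> cindex n k -> R :=
  fun i c => A (merge i c).

Arguments matk {R d n} A k _ _.

Definition zmap (d : nat) (n r : 'I_d -> nat)
    (z : forall j : 'I_d, 'I_(n j) -> 'I_(r j)) (m : mindex n) : mindex r :=
  finfun (fun j : 'I_d => z j (m j)).

(* Mean tensor of TBM(rho, S, z_1..z_d): E Y_{i_1..i_d} = rho S_{z_1(i_1)..z_d(i_d)}. *)
Definition tbm_mean (R : pzRingType) (d : nat) (n r : 'I_d -> nat) (rho : R)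
    (S : mindex r -> R) (z : forall j : 'I_d, 'I_(n j) -> 'I_(r j)) :
    mindex n -> R :=
  fun m => rho * S (zmap z m).

Definition gram (R : pzRingType) (I C : finType) (M : I -> C -> R) : I -> I -> R :=
  fun i j => \sum_(c : C) M i c * M j c.

Definition row_dist (R : rcfType) (I C : finType) (M : I -> C -> R) (i j : I) : R :=
  Num.sqrt (\sum_(c : C) (M i c - M j c) ^+ 2).

(* Minimum of f over {t | P t} (finite); equals 0 if that set is empty.
   The default of the min-fold is the max of f over the set, which is >= every
   value, so on a nonempty set this is exactly the minimum. *)
Definition fmin (R : realDomainType) (T : finType) (P : pred T) (f : T -> R) : R :=
  \big[Num.min/ \big[Num.max/0]_(t | P t) f t]_(t | P t) f t.

Definition sep (R : rcfType) (d : nat) (r : 'I_d -> nat) (S : mindex r -> R)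
    (k : 'I_d) : R :=
  fmin (fun p : 'I_(r k) * 'I_(r k) => p.1 != p.2)
    (fun p => row_dist (matk S k) p.1 p.2
              / Num.sqrt ((\prod_(j < d) r j)%:R / (r k)%:R)).

Definition balance (R : realFieldType) (d : nat) (n r : 'I_d -> nat)
    (z : forall j : 'I_d, 'I_(n j) -> 'I_(r j)) (j : 'I_d) : R :=
  fmin predT (fun l : 'I_(r j) =>
    #|[set i : 'I_(n j) | z j i == l]|%:R / ((n j)%:R / (r j)%:R)).
Arguments balance {R d n r} z j.

From Pilot Require Import Defs.
From HB Require Import structures.
From mathcomp Require Import all_boot all_order all_algebra.
From mathcomp Require Import ring lra.
Set Implicit Arguments. Unset Strict Implicit. Unset Printing Implicit Defensive.
Import Order.TTheory GRing.Theory Num.Theory.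
Local Open Scope ring_scope.

(* The mean matrix is block constant: X x c = rho * (mat_k S) (z_k x) (z_{-k} c),
   where z_{-k} maps a column index to its tuple of clusters in the other modes.
   Hence row i minus row j of X X^T, evaluated at x, is rho^2 h (z_k x) for a
   function h of the row cluster only, and h a - h b (a = z_k i, b = z_k j) is a
   sum over the columns c of squared differences of rows a and b of
   mat_k S.  Since every column cluster has at least prod_{j <> k} alpha_j n_j / r_j
   members, h a - h b is at least that product times delta_k^2 prod_j r_j / r_k.
   Keeping only the rows x in the clusters a and b, each with at least
   alpha_k n_k / r_k members, gives
     |(XX^T)_i - (XX^T)_j|^2 >= rho^4 (alpha_k n_k / r_k) (h a^2 + h b^2)
                             >= rho^4 (alpha_k n_k / r_k) (h a - h b)^2 / 2. *)

Lemma fmin_le (R : realDomainType) (T : finType) (P : pred T) (f : T -> R) t :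
  P t -> fmin P f <= f t.
Proof. by move=> Pt; rewrite /fmin (bigD1 t) //= ge_min lexx. Qed.

Lemma fmin_ge0 (R : realDomainType) (T : finType) (P : pred T) (f : T -> R) :
  (forall t, P t -> 0 <= f t) -> 0 <= fmin P f.
Proof.
move=> f_ge0; rewrite /fmin; apply: (big_ind (fun x => 0 <= x)) => //.
- by apply: (big_ind (fun x => 0 <= x)) => // x y x_ge0 y_ge0; rewrite le_max x_ge0.
- by move=> x y x_ge0 y_ge0; rewrite le_min x_ge0 y_ge0.
Qed.

Lemma fmin_pred0 (R : realDomainType) (T : finType) (P : pred T) (f : T -> R) :
  P =1 xpred0 -> fmin P f = 0.
Proof. by move=> P0; rewrite /fmin !big_pred0. Qed.

Lemma sqr_le_sqr (R : realDomainType) (x y : R) : 0 <= x -> x <= y -> x ^+ 2 <= y ^+ 2.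
Proof. by move=> x_ge0 le_xy; rewrite ler_sqr ?nnegrE // (le_trans x_ge0). Qed.

Lemma le_of_sqr_le (R : rcfType) (x y : R) : 0 <= y -> x ^+ 2 <= y ^+ 2 -> x <= y.
Proof.
move=> y_ge0 le_sqr; apply: le_trans (ler_norm x) _.
by rewrite -(ger0_norm y_ge0) -!sqrtr_sqr ler_wsqrtr.
Qed.

Lemma sqr_subr_le (R : realFieldType) (x y : R) : (x - y) ^+ 2 / 2 <= x ^+ 2 + y ^+ 2.
Proof. have := sqr_ge0 (x + y); nra. Qed.

Lemma row_dist_sqr (R : rcfType) (I C : finType) (M : I -> C -> R) i j :
  row_dist M i j ^+ 2 = \sum_c (M i c - M j c) ^+ 2.
Proof. by rewrite sqr_sqrtr // sumr_ge0 // => c _; rewrite sqr_ge0. Qed.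

Lemma sum_fiber_const (V : nmodType) (I L : finType) (u : I -> L) (f : L -> V) l :
  \sum_(x | u x == l) f (u x) = f l *+ #|[set x | u x == l]|.
Proof.
rewrite (eq_bigr (fun=> f l)) => [|x /eqP -> //].
by rewrite -sumr_const; apply: eq_bigl => x; rewrite inE.
Qed.

Lemma ler_sum_fibers (R : numDomainType) (C C' : finType) (v : C -> C') (g : C' -> R) m :
  (forall c', 0 <= g c') -> (forall c', m <= #|[set c | v c == c']|%:R) ->
  m * \sum_c' g c' <= \sum_c g (v c).
Proof.
move=> g_ge0 m_le; rewrite (partition_big v xpredT) //= mulr_sumr.
apply: ler_sum => c' _; rewrite sum_fiber_const -mulr_natr mulrC.
exact: ler_wpM2l.
Qed.

Lemma sum_sqr_ge_two_fibers (R : realDomainType) (I L : finType) (u : I -> L) (h : L -> R) a b :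
  a != b ->
  #|[set x | u x == a]|%:R * h a ^+ 2 + #|[set x | u x == b]|%:R * h b ^+ 2
    <= \sum_x h (u x) ^+ 2.
Proof.
move=> ab; rewrite (partition_big u xpredT) //= (bigD1 a) //= (bigD1 b) 1?eq_sym //=.
rewrite !(sum_fiber_const u (fun l => h l ^+ 2)) !mulr_natl addrA lerDl.
by apply: sumr_ge0 => l _; apply: sumr_ge0 => x _; apply: sqr_ge0.
Qed.

Section LumpedGram.
Variables (R : rcfType) (I C L C' : finType).
Variables (u : I -> L) (v : C -> C') (F : L -> C' -> R) (rho : R) (M : I -> C -> R).
Hypothesis M_lumped : forall x c, M x c = rho * F (u x) (v c).

Let cross a b l := \sum_c (F a (v c) - F b (v c)) * F l (v c).

Lemma gram_subr_lumped y y' x :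
  gram M y x - gram M y' x = rho ^+ 2 * cross (u y) (u y') (u x).
Proof.
rewrite /gram -sumrB /cross mulr_sumr.
by apply: eq_bigr => c _; rewrite !M_lumped; ring.
Qed.

Lemma cross_subr_diag a b : cross a b a - cross a b b = \sum_c (F a (v c) - F b (v c)) ^+ 2.
Proof. by rewrite /cross -sumrB; apply: eq_bigr => c _; ring. Qed.

Lemma row_dist_gram_lumped i j (m mc : R) :
  u i != u j -> 0 <= m ->
  m <= #|[set x | u x == u i]|%:R -> m <= #|[set x | u x == u j]|%:R ->
  0 <= mc -> (forall c', mc <= #|[set c | v c == c']|%:R) ->
  rho ^+ 4 * (m / 2) * (mc * row_dist F (u i) (u j) ^+ 2) ^+ 2
    <= row_dist (gram M) i j ^+ 2.
Proof.
move=> uij m_ge0 m_le_i m_le_j mc_ge0 mc_le.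
set h := cross (u i) (u j).
have -> : row_dist (gram M) i j ^+ 2 = rho ^+ 4 * \sum_x h (u x) ^+ 2.
  by rewrite row_dist_sqr mulr_sumr; apply: eq_bigr => x _; rewrite gram_subr_lumped exprMn -exprM.
rewrite -mulrA ler_wpM2l ?exprn_even_ge0 //.
have sep_le_cross : mc * row_dist F (u i) (u j) ^+ 2 <= h (u i) - h (u j).
  by rewrite row_dist_sqr cross_subr_diag; apply: ler_sum_fibers => c'; rewrite ?sqr_ge0.
apply: le_trans (sum_sqr_ge_two_fibers u h uij).
apply: le_trans (_ : m * (h (u i) ^+ 2 + h (u j) ^+ 2) <= _); last first.
  by rewrite mulrDr lerD // ler_wpM2r ?sqr_ge0.
rewrite -mulrA ler_wpM2l // mulrC.
apply: le_trans (sqr_subr_le _ _); rewrite ler_wpM2r ?invr_ge0 ?ler0n //.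
by rewrite sqr_le_sqr // mulr_ge0 ?sqr_ge0.
Qed.

End LumpedGram.

Lemma sep_ge0 (R : rcfType) (d : nat) (r : 'I_d -> nat) (S : mindex r -> R) k :
  0 <= sep S k.
Proof. by apply: fmin_ge0 => p _; rewrite divr_ge0 ?sqrtr_ge0. Qed.

Lemma sep_le_row_dist (R : rcfType) (d : nat) (r : 'I_d -> nat) (S : mindex r -> R) k l l' :
  l != l' ->
  sep S k ^+ 2 * ((\prod_(j < d) r j)%:R / (r k)%:R)
    <= row_dist (matk S k) l l' ^+ 2.
Proof.
move=> ll'; set q : R := _ / _.
have /predU1P[->|q_gt0] : (q == 0) || (0 < q) by rewrite -le0r divr_ge0.
  by rewrite mulr0 sqr_ge0.
have sep_le : sep S k <= row_dist (matk S k) l l' / Num.sqrt q.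
  exact: (@fmin_le _ _ _ _ (l, l') ll').
rewrite -(sqr_sqrtr (ltW q_gt0)) -exprMn sqr_le_sqr ?mulr_ge0 ?sep_ge0 ?sqrtr_ge0 //.
by rewrite -ler_pdivlMr ?sqrtr_gt0.
Qed.

Section TensorBlockModel.
Variables (R : rcfType) (d : nat) (n r : 'I_d -> nat).
Variable z : forall j : 'I_d, 'I_(n j) -> 'I_(r j).
Arguments z : clear implicits.

Definition zmap_cindex k (c : cindex n k) : cindex r k :=
  finfun (fun j : {j : 'I_d | j != k} => z (val j) (c j)).

Lemma zmap_merge k (i : 'I_(n k)) (c : cindex n k) :
  zmap z (Defs.merge i c) = Defs.merge (z k i) (zmap_cindex c).
Proof.
apply/ffunP => j; rewrite !ffunE.
by case: (k =P j) => [e|ne]; [subst j; rewrite !cast_ord_id | rewrite ffunE].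
Qed.

Lemma matk_tbm_mean rho (S : mindex r -> R) k x c :
  matk (tbm_mean rho S z) k x c = rho * matk S k (z k x) (zmap_cindex c).
Proof. by rewrite /matk /tbm_mean zmap_merge. Qed.

Lemma card_fiber_zmap_cindex k (c' : cindex r k) :
  #|[set c | zmap_cindex c == c']|
    = (\prod_(j : {j : 'I_d | j != k}) #|[set x | z (val j) x == c' j]|)%N.
Proof.
pose F (j : {j : 'I_d | j != k}) := [pred x | z (val j) x == c' j].
have -> : #|[set c | zmap_cindex c == c']| = #|family F : simpl_pred (cindex n k)|.
  apply: eq_card => c; rewrite inE /F; apply/eqP/familyP => [<- j | c_in].
    by rewrite ffunE inE.
  by apply/ffunP => j; rewrite ffunE; apply/eqP; have := c_in j; rewrite inE.
rewrite card_family foldrE big_map big_enum /=.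
by apply: eq_bigr => j _; apply: eq_card => x; rewrite inE.
Qed.

Definition cluster_size_lb j : R := balance z j * ((n j)%:R / (r j)%:R).

Lemma balance_ge0 j : 0 <= balance z j :> R.
Proof. by apply: fmin_ge0 => l _; rewrite !divr_ge0. Qed.

Lemma cluster_size_lb_ge0 j : 0 <= cluster_size_lb j.
Proof. by rewrite mulr_ge0 ?balance_ge0 ?divr_ge0. Qed.

Lemma balance_le j l :
  balance z j <= #|[set i | z j i == l]|%:R / ((n j)%:R / (r j)%:R) :> R.
Proof. exact: (@fmin_le _ _ predT _ l). Qed.

Lemma balance_gt0_dim j : 0 < balance z j :> R -> (0 < n j)%N.
Proof.
move=> bal_gt0; rewrite lt0n; apply/eqP => nj0.
have [rj0|rj_gt0] := posnP (r j).
  suff : balance z j = 0 :> R by move/eqP; rewrite gt_eqF.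
  apply: fmin_pred0 => l; suff : (l < 0)%N by rewrite ltn0.
  by rewrite -[X in (_ < X)%N]rj0.
have nR0 : (n j)%:R = 0 :> R by rewrite nj0.
by have := lt_le_trans bal_gt0 (balance_le (Ordinal rj_gt0)); rewrite nR0 mul0r invr0 mulr0 ltxx.
Qed.

Lemma cluster_size_lb_le_card j l : (0 < n j)%N -> cluster_size_lb j <= #|[set i | z j i == l]|%:R.
Proof.
move=> nj_gt0; have rj_gt0 : (0 < r j)%N := leq_ltn_trans (leq0n l) (ltn_ord l).
by rewrite /cluster_size_lb -ler_pdivlMr ?divr_gt0 ?ltr0n // balance_le.
Qed.

Lemma prod_cluster_size_lb_le_card_fiber k (c' : cindex r k) : (forall j, 0 < n j)%N ->
  \prod_(j < d | j != k) cluster_size_lb j <= #|[set c | zmap_cindex c == c']|%:R.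
Proof.
move=> n_gt0; rewrite card_fiber_zmap_cindex natr_prod (big_sub (predC1 k)) /=.
by apply: ler_prod => j _; rewrite cluster_size_lb_le_card ?cluster_size_lb_ge0.
Qed.

Lemma tbm_bound_sqrE k (s rho : R) : (forall j, 0 < balance z j :> R) ->
  ((\prod_(j < d) balance z j) / Num.sqrt (2 * balance z k)
      * (s ^+ 2 / Num.sqrt ((n k * r k)%:R)) * (\prod_(j < d) (n j)%:R) * rho ^+ 2) ^+ 2
  = rho ^+ 4 * (cluster_size_lb k / 2)
      * (\prod_(j < d | j != k) cluster_size_lb j
         * (s ^+ 2 * ((\prod_(j < d) r j)%:R / (r k)%:R))) ^+ 2.
Proof.
move=> bal_gt0; have n_gt0 j := balance_gt0_dim (bal_gt0 j).
have r_gt0 j : (0 < r j)%N by case: (z j (Ordinal (n_gt0 j))) => l /(leq_ltn_trans (leq0n l)).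
rewrite !exprMn !exprVn !sqr_sqrtr ?mulr_ge0 ?balance_ge0 //.
rewrite /cluster_size_lb !big_split /= prodfV natr_prod.
rewrite (bigD1 k) //= [\prod_(j < d) (n j)%:R](bigD1 k) //= [\prod_(j < d) (r j)%:R](bigD1 k) //=.
have rR_neq0 : \prod_(j < d | j != k) (r j)%:R != 0 :> R.
  by rewrite prodf_seq_neq0; apply/allP => j _; rewrite pnatr_eq0 -lt0n r_gt0 implybT.
by field; rewrite rR_neq0 (gt_eqF (bal_gt0 k)) !pnatr_eq0 -!lt0n n_gt0 r_gt0.
Qed.

End TensorBlockModel.
Arguments cluster_size_lb {R d n r} z j.

Theorem lemma6p2 (R : rcfType) (d : nat) (n r : 'I_d -> nat) (rho : R)
    (S : mindex r -> R) (z : forall j : 'I_d, 'I_(n j) -> 'I_(r j)) (k : 'I_d) :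
  0 <= rho ->
  (forall m : mindex r, -1 <= S m <= 1) ->
  let X := matk (tbm_mean rho S z) k in
  forall i j : 'I_(n k), z k i != z k j ->
    (\prod_(j' < d) balance z j') / Num.sqrt (2 * balance z k)
      * (sep S k ^+ 2 / Num.sqrt ((n k * r k)%:R))
      * (\prod_(j' < d) (n j')%:R) * rho ^+ 2
    <= row_dist (gram X) i j.
Proof.
(* The entries of S need not be bounded. *)
move=> rho_ge0 _ X i j zij.
have [/forallP bal_gt0 | /forallPn[j0]] := boolP [forall j0, 0 < balance z j0 :> R]; last first.
  rewrite lt0r balance_ge0 andbT negbK => /eqP bal0.
  by rewrite (bigD1 j0) //= bal0 !mul0r sqrtr_ge0.
have n_gt0 j0 := balance_gt0_dim (bal_gt0 j0).
apply: le_of_sqr_le; first exact: sqrtr_ge0.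
rewrite tbm_bound_sqrE //.
have mc_ge0 : 0 <= \prod_(j0 < d | j0 != k) cluster_size_lb z j0 :> R.
  by apply: prodr_ge0 => j0 _; apply: cluster_size_lb_ge0.
have lumped_bound := row_dist_gram_lumped (@matk_tbm_mean _ _ _ _ z rho S k) zij
  (cluster_size_lb_ge0 _ z k)
  (cluster_size_lb_le_card _ z _ (n_gt0 k)) (cluster_size_lb_le_card _ z _ (n_gt0 k))
  mc_ge0 (fun c' => prod_cluster_size_lb_le_card_fiber _ z c' n_gt0).
have lb_ge0 : 0 <= rho ^+ 4 * (cluster_size_lb z k / 2).
  by rewrite mulr_ge0 ?exprn_even_ge0 ?divr_ge0 ?cluster_size_lb_ge0.
apply: le_trans lumped_bound; rewrite ler_wpM2l // sqr_le_sqr ?ler_wpM2l ?sep_le_row_dist //.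
by rewrite mulr_ge0 // mulr_ge0 ?sqr_ge0 ?divr_ge0.
Qed.
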